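(* Consider a position in the Strong Ramsey game $\mathcal{R}(K_{\aleph_0}^{(3)}, \hat{K}_{2,4}^{(3)})$ in which $P_2$ has claimed all edges of a copy of $\hat{K}_{2,3}^{(3)}$, $P_1$ has claimed at most $10$ edges in total, and $P_1$ does not have a threat. If it is $P_2$'s turn, then $P_2$ has a strategy from this position guaranteeing that $P_1$ never claims all edges of a copy of $\hat{K}_{2,4}^{(3)}$ (a drawing strategy).
   Context: Strong Ramsey game $\mathcal{R}(B,G)$: players $P_1$, $P_2$ alternately claim unclaimed edges of the $k$-uniform hypergraph $B$, $P_1$ first; the first to claim all edges of a copy of the finite $k$-uniform hypergraph $G$ wins; if nobody does so in finitely many moves the game is a draw. $K_{\aleph_0}^{(3)}$ is the complete $3$-uniform hypergraph on a countably infinite vertex set. $\hat{K}_{2,l}$ ($l\ge3$) is $K_{2,l}$ plus the edge joining its two vertices of degree $l$. For a graph $H$, $H^{(3)}$ is the $3$-uniform hypergraph obtained by adding one fixed new vertex (the center) to every edge of $H$. $P_1$ has a threat if she has claimed all edges of a copy of $\hat{K}_{2,4}^{(3)}$ minus one edge $e$, where the edge of the board corresponding to $e$ is claimed by neither player. *)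

From HB Require Import structures.
From mathcomp Require Import all_boot finmap.
Set Implicit Arguments.
Unset Strict Implicit.
Unset Printing Implicit Defensive.
Local Open Scope fset_scope.

(* Vertex set of K_{aleph_0}^{(3)} is nat; an edge is a 3-element finite set. *)
Definition hedge := {fset nat}.
Definition board_edge (e : hedge) : Prop := #|` e| = 3.

(* H^{(3)}: add the fixed center c to every edge of the graph H. *)
Definition hyp3 (c : nat) (H : seq (nat * nat)) : seq hedge :=
  [seq [fset c; p.1; p.2] | p <- H].

(* \hat K_{2,l}: K_{2,l} with parts {1,2} and {3,...,l+2}, plus edge 12. *)
Definition Khat2 (l : nat) : seq (nat * nat) :=
  (1, 2) :: [seq (1, x) | x <- iota 3 l] ++ [seq (2, x) | x <- iota 3 l].

(* \hat K_{2,l}^{(3)} with center 0; vertex set {0,...,l+2}. *)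
Definition Khat3 (l : nat) : seq hedge := hyp3 0 (Khat2 l).
Definition nverts (l : nat) : nat := l + 3.

Definition has_copy (G : seq hedge) (nv : nat) (S : hedge -> Prop) : Prop :=
  exists f : nat -> nat, {in iota 0 nv &, injective f} /\
    forall e, e \in G -> S [fset f x | x in e].

Definition threat (P1 P2 : hedge -> Prop) : Prop :=
  exists f : nat -> nat, {in iota 0 (nverts 4) &, injective f} /\
    exists2 e0, e0 \in Khat3 4 &
      (forall e, e \in Khat3 4 -> e != e0 -> P1 [fset f x | x in e]) /\
      ~ P1 [fset f x | x in e0] /\ ~ P2 [fset f x | x in e0].

(* Continuation of the game from position (A,B) with P2 to move:
   m i is the i-th move; even i are P2's moves, odd i are P1's moves. *)
Definition claimed1 (A : {fset hedge}) (m : nat -> hedge) (n : nat) (e : hedge) : Prop :=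
  e \in A \/ exists2 i, i < n & odd i /\ m i = e.
Definition claimed2 (B : {fset hedge}) (m : nat -> hedge) (n : nat) (e : hedge) : Prop :=
  e \in B \/ exists2 i, i < n & ~~ odd i /\ m i = e.
Definition unclaimed_at (A B : {fset hedge}) (m : nat -> hedge) (n : nat) (e : hedge) : Prop :=
  board_edge e /\ ~ claimed1 A m n e /\ ~ claimed2 B m n e.

(* A strategy for P2 maps the history of moves (since the position) to a move. *)
Definition strategy := seq hedge -> hedge.

(* sigma is a legal strategy for P2 guaranteeing that P1 never claims all
   edges of a copy of \hat K_{2,4}^{(3)} (unless P2 has already won, ending the game):
   along every legal play consistent with sigma, sigma's moves are legal, and
   whenever P1 owns a copy, P2 already owns one (so P2 completed hers earlier). *)
Definition drawing_strategy (A B : {fset hedge}) (sigma : strategy) : Prop :=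
  forall (m : nat -> hedge) (n : nat),
    (forall i, i < n -> unclaimed_at A B m i (m i)) ->
    (forall i, i < n -> ~~ odd i -> m i = sigma (mkseq m i)) ->
    (~~ odd n -> unclaimed_at A B m n (sigma (mkseq m n))) /\
    (has_copy (Khat3 4) (nverts 4) (claimed1 A m n) ->
     has_copy (Khat3 4) (nverts 4) (claimed2 B m n)).

(* P2 owns a copy of K̂_{2,3}^{(3)} with center c and hubs a, b; fix {s, t} = {a, b}. She keeps
   claiming {c, s, y} for a vertex y never used before, and if P1 does not answer with {c, t, y},
   P2 claims that edge and completes a copy of K̂_{2,4}^{(3)} with the new leaf y.
   The answers are useless to P1: y lies on no other edge of P1, whereas every vertex of
   K̂_{2,4}^{(3)} has degree at least 2. So P1 can only win with the single move e0 by which she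
   deviates. If her copy uses no answer, A was a threat. Otherwise an answer sits on a leaf w of
   degree 2 whose other edge is e0, and all the other edges lie in A: a copy of K̂_{2,3}^{(3)}
   whose center and one hub are c and t. This cannot happen for both choices of t, since the two
   configurations together would need 11 distinct edges of A; P2 chooses t accordingly. *)

From Stdlib Require Import Classical.
From HB Require Import structures.
From mathcomp Require Import all_boot finmap zify.

Set Implicit Arguments.
Unset Strict Implicit.
Unset Printing Implicit Defensive.
Local Open Scope fset_scope.

Definition K24 := Khat2 4.
Definition edge_verts (p : nat * nat) : seq nat := [:: 0; p.1; p.2].
Definition tri (x y z : nat) : hedge := [fset x; y; z].
Definition edge_img (f : nat -> nat) (p : nat * nat) : hedge := [fset f v | v in edge_verts p].
Definition inj_K24 (f : nat -> nat) := {in iota 0 7 &, injective f}.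

Lemma in_tri u x y z : (u \in tri x y z) = [|| u == x, u == y | u == z].
Proof. by rewrite !inE orbA. Qed.

Lemma tri_board_edge x y z : x != y -> x != z -> y != z -> board_edge (tri x y z).
Proof.
move=> xy xz yz; rewrite /board_edge /tri -fsetUA !cardfsU1 cardfs1 !inE.
by rewrite (negbTE xy) (negbTE xz) (negbTE yz).
Qed.

Lemma edge_imgE f p : edge_img f p = tri (f 0) (f p.1) (f p.2).
Proof.
apply/fsetP => u; rewrite in_tri; apply/imfsetP/idP => [[v /= + ->]|].
  by rewrite !inE => /or3P[]/eqP->; rewrite eqxx ?orbT.
by case/or3P=> /eqP->; [exists 0|exists p.1|exists p.2]; rewrite //= !inE eqxx ?orbT.
Qed.

Lemma img_tri f p : [fset f u | u in tri 0 p.1 p.2] = edge_img f p.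
Proof. by apply: eq_imfset => // u; rewrite in_tri !inE. Qed.

Lemma mem_edge_img f p v : v \in edge_verts p -> f v \in edge_img f p.
Proof. by move=> v_in; apply/imfsetP; exists v. Qed.

Definition copy (l : nat) (S : hedge -> Prop) (f : nat -> nat) : Prop :=
  {in iota 0 (nverts l) &, injective f} /\ forall p, p \in Khat2 l -> S (edge_img f p).

Lemma Khat3_tri l p : p \in Khat2 l -> tri 0 p.1 p.2 \in Khat3 l.
Proof. exact: (map_f (fun q : nat * nat => [fset 0; q.1; q.2])). Qed.

Lemma has_copyE l S : has_copy (Khat3 l) (nverts l) S <-> exists f, copy l S f.
Proof.
split=> -[f [f_inj fS]]; exists f; split=> //.
  by move=> p /Khat3_tri/fS; rewrite img_tri.
by move=> _ /mapP[p p_in ->]; rewrite img_tri; apply: fS.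
Qed.

Lemma threatI (A B : {fset hedge}) f p0 : inj_K24 f -> p0 \in K24 ->
    (forall p, p \in K24 -> p != p0 -> edge_img f p \in A) ->
    edge_img f p0 \notin A -> edge_img f p0 \notin B ->
  threat (fun e => e \in A) (fun e => e \in B).
Proof.
move=> f_inj p0_in fA /negP p0A /negP p0B; exists f; split=> //.
exists (tri 0 p0.1 p0.2); first exact: Khat3_tri.
rewrite img_tri; split=> // _ /mapP[p p_in ->] ne_p; rewrite img_tri.
by apply: fA => //; apply: contraNneq ne_p => ->.
Qed.

Lemma K24_vert p v : p \in K24 -> v \in edge_verts p -> v \in iota 0 7.
Proof.
have check : all (fun p => all (mem (iota 0 7)) (edge_verts p)) K24 by [].
by move=> p_in; apply/allP; apply: (allP check).
Qed.

Lemma K24_other_edge p w : p \in K24 -> w \in edge_verts p ->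
  exists2 q, q \in K24 & (q != p) && (w \in edge_verts q).
Proof.
have check : all (fun p => all (fun w =>
  has (fun q => (q != p) && (w \in edge_verts q)) K24) (edge_verts p)) K24 by [].
by move=> p_in w_in; apply/hasP; apply: (allP (allP check p p_in)).
Qed.

Lemma K24_edge_inj p q : p \in K24 -> q \in K24 ->
  {subset edge_verts p <= edge_verts q} -> p = q.
Proof.
have check : all (fun p => all (fun q =>
  all (mem (edge_verts q)) (edge_verts p) ==> (p == q)) K24) K24 by [].
move=> p_in q_in /(introT allP) sub; apply/eqP.
exact: implyP (allP (allP check p p_in) q q_in) sub.
Qed.

Lemma K24_leaf_on_edge p v : p \in K24 -> 3 <= v -> v \in edge_verts p -> v = p.2.
Proof.
have check : all (fun p => (p.1 < 3) && (p.2 >= 3) || (p == (1, 2))) K24 by [].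
move=> p_in; case/orP: (allP check p p_in) => [/andP[lt3 _]|/eqP-> //].
  by rewrite !inE => v3 /or3P[]/eqP vE //; move: v3; rewrite vE // leqNgt lt3.
by rewrite !inE => v3 /or3P[]/eqP vE; move: v3; rewrite vE.
Qed.

Lemma K24_degree2_leaf w p0 p1 : p0 \in K24 -> p1 \in K24 -> w \in edge_verts p1 ->
    {in K24, forall r, w \in edge_verts r -> r = p0 \/ r = p1} ->
  [/\ 3 <= w, w \in edge_verts p0 & p1 = (1, w) \/ p1 = (2, w)].
Proof.
pose only w p0 p1 := all (fun r => (w \in edge_verts r) ==> (r == p0) || (r == p1)) K24.
have check : all (fun w => all (fun p0 => all (fun p1 =>
  only w p0 p1 && (w \in edge_verts p1) ==>
  [&& 3 <= w, w \in edge_verts p0 & (p1 == (1, w)) || (p1 == (2, w))]) K24) K24) (iota 0 7).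
  by vm_compute.
move=> p0_in p1_in w_in only_w.
have /implyP := allP (allP (allP check w (K24_vert p1_in w_in)) p0 p0_in) p1 p1_in.
rewrite w_in andbT; case/(_ _)/and3P.
  by apply/allP => r r_in; apply/implyP => /(only_w r r_in)[]->; rewrite eqxx ?orbT.
by move=> -> -> /orP[]/eqP->; split=> //; [left|right].
Qed.

Lemma K24_edge_via_hub i w x : i \in [:: 1; 2] -> w \in iota 3 4 -> x \in iota 0 7 ->
    x \notin [:: 0; i; w] ->
  exists2 q, q \in K24 & (w \notin edge_verts q) && perm_eq (edge_verts q) [:: 0; i; x].
Proof.
have check : all (fun i => all (fun w => all (fun x => (x \notin [:: 0; i; w]) ==>
  has (fun q => (w \notin edge_verts q) && perm_eq (edge_verts q) [:: 0; i; x]) K24)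
    (iota 0 7)) (iota 3 4)) [:: 1; 2] by vm_compute.
move=> i_in w_in x_in x_new; apply/hasP.
exact: implyP (allP (allP (allP check i i_in) w w_in) x x_in) x_new.
Qed.

Definition K24_avoiding (w : nat) := [seq q <- K24 | w \notin edge_verts q].

Lemma size_K24_avoiding w : w \in iota 3 4 -> size (K24_avoiding w) = 7.
Proof.
have check : all (fun w => size (K24_avoiding w) == 7) (iota 3 4) by [].
by move=> w_in; apply/eqP; apply: (allP check).
Qed.

Lemma count_K24_avoiding w u : w \in iota 3 4 -> u \in [:: 0; 1; 2] ->
  4 <= count (fun q => u \in edge_verts q) (K24_avoiding w).
Proof.
have check : all (fun w => all (fun u =>
  4 <= count (fun q => u \in edge_verts q) (K24_avoiding w)) [:: 0; 1; 2]) (iota 3 4) by [].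
by move=> w_in; apply: (allP (allP check w w_in)).
Qed.

Lemma Khat23_cover x : x < 6 -> exists2 p, p \in Khat2 3 & x \in edge_verts p.
Proof.
have check : all (fun x => has (fun p => x \in edge_verts p) (Khat2 3)) (iota 0 6) by [].
by move=> x_lt; apply/hasP; apply: (allP check); rewrite mem_iota.
Qed.

Lemma Khat24_split p : p \in K24 -> [\/ p \in Khat2 3, p = (1, 6) | p = (2, 6)].
Proof.
have check : all (fun p => [|| p \in Khat2 3, p == (1, 6) | p == (2, 6)]) K24 by [].
by move=> /(allP check)/or3P[|/eqP|/eqP]; [constructor 1|constructor 2|constructor 3].
Qed.

Lemma Khat23_lt6 p : p \in Khat2 3 -> (p.1 < 6) && (p.2 < 6).
Proof.
have check : all (fun p => (p.1 < 6) && (p.2 < 6)) (Khat2 3) by [].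
exact: (allP check).
Qed.

Lemma edge_img_inj f p q : inj_K24 f -> p \in K24 -> q \in K24 ->
  edge_img f p = edge_img f q -> p = q.
Proof.
move=> f_inj p_in q_in pq; apply: K24_edge_inj => // v v_in.
have /imfsetP[v' /= v'_in /f_inj fv] : f v \in edge_img f q by rewrite -pq mem_edge_img.
by rewrite (fv (K24_vert p_in v_in) (K24_vert q_in v'_in)).
Qed.

Lemma copy_sub (S S' : hedge -> Prop) l f : (forall e, S e -> S' e) -> copy l S f -> copy l S' f.
Proof. by move=> SS' [f_inj fS]; split=> // p /fS/SS'. Qed.

Lemma copy_add_leaf (S : hedge -> Prop) f y : copy 3 S f ->
    (forall p, p \in Khat2 3 -> y \notin edge_img f p) ->
    S (tri (f 0) (f 1) y) -> S (tri (f 0) (f 2) y) ->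
  copy 4 S (fun x => if x == 6 then y else f x).
Proof.
move=> [f_inj fS] y_new S1 S2.
have f_ne_y x : x < 6 -> f x != y.
  move=> /Khat23_cover[p p_in x_in]; apply: contraNneq (y_new p p_in) => <-.
  exact: mem_edge_img.
split=> [x z|p /Khat24_split[p_in|->|->]].
- rewrite !mem_iota /nverts /= => x_lt z_lt.
  case: eqP => [->|/eqP x6]; case: eqP => [->|/eqP z6] //.
  + by move/esym/eqP; rewrite (negbTE (f_ne_y z _)) //; lia.
  + by move/eqP; rewrite (negbTE (f_ne_y x _)) //; lia.
  + by apply: f_inj; rewrite mem_iota /nverts; lia.
- have /andP[p1 p2] := Khat23_lt6 p_in.
  by rewrite !edge_imgE /= (ltn_eqF p1) (ltn_eqF p2) -edge_imgE; apply: fS.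
- by rewrite edge_imgE.
- by rewrite edge_imgE.
Qed.

Lemma tri_eq_pair a b y c t : a != b -> a != y -> b != y -> tri a b y = tri c t y ->
  (a == c) && (b == t) || (a == t) && (b == c).
Proof.
move=> ab ay bY E.
have a_in : a \in tri c t y by rewrite -E in_tri eqxx.
have b_in : b \in tri c t y by rewrite -E in_tri eqxx orbT.
move: a_in b_in ab; rewrite !in_tri (negbTE ay) (negbTE bY) !orbF.
by case/orP=> /eqP->; case/orP=> /eqP->; rewrite ?eqxx ?orbT.
Qed.

Lemma copy3_hubs_neq S f : copy 3 S f -> [/\ f 0 != f 1, f 0 != f 2 & f 1 != f 2].
Proof. by case=> f_inj _; split; apply/negP => /eqP/f_inj; rewrite !mem_iota => /(_ isT isT). Qed.

Section P1Position.
Variables (A : {fset hedge}) (c t : nat).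

Definition free_vertex (y : nat) := [/\ forall e, e \in A -> y \notin e, y != c & y != t].
(* The answers {c, t, y} that P2 forces from P1. *)
Definition pendant (e : hedge) := exists2 y, free_vertex y & e = tri c t y.

(* K24 minus the leaf w is K̂_{2,3}; its copy in A sends the center 0 and the hub i onto {c, t}. *)
Definition copy_minus_leaf_at (f : nat -> nat) (w i : nat) :=
  [/\ inj_K24 f, w \in iota 3 4, i \in [:: 1; 2],
      {in K24, forall q, w \notin edge_verts q -> edge_img f q \in A} &
      (f 0 == c) && (f i == t) || (f 0 == t) && (f i == c)].
Definition copy_minus_leaf := exists f w i, copy_minus_leaf_at f w i.

Lemma pendant_through f w y e0 r : free_vertex y -> f w = y -> w \in edge_verts r ->
    [\/ edge_img f r \in A, pendant (edge_img f r) | edge_img f r = e0] ->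
  edge_img f r = e0 \/ edge_img f r = tri c t y.
Proof.
move=> [yA yc yt] fw w_r; have y_r : y \in edge_img f r by rewrite -fw mem_edge_img.
case=> [/yA|[y' _ rE]|]; [by rewrite y_r | right | by left].
by move: y_r; rewrite rE in_tri (negbTE yc) (negbTE yt) => /eqP->.
Qed.

Lemma pendant_vertex f p y : edge_img f p = tri c t y ->
  exists2 w, w \in edge_verts p & f w = y.
Proof.
move=> pE; have /imfsetP[w /= w_p fw] : y \in edge_img f p by rewrite pE in_tri eqxx !orbT.
by exists w.
Qed.

(* Every vertex of K24 lies on two edges, but a free vertex lies on only one pendant edge. *)
Lemma copy_of_pendants f : inj_K24 f ->
    (forall p, p \in K24 -> edge_img f p \in A \/ pendant (edge_img f p)) ->
  forall p, p \in K24 -> edge_img f p \in A.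
Proof.
move=> f_inj f_edges p p_in; case: (f_edges p p_in) => // -[y y_free pE].
have [w w_p fw] := pendant_vertex pE.
have [q q_in /andP[/eqP qp w_q]] := K24_other_edge p_in w_p.
exfalso; apply: qp; apply: (edge_img_inj f_inj q_in p_in); rewrite pE.
have q_edge : [\/ edge_img f q \in A, pendant (edge_img f q) | edge_img f q = tri c t y].
  by case: (f_edges q q_in) => ?; [apply: Or31 | apply: Or32].
by case: (pendant_through y_free fw w_q q_edge).
Qed.

Section Deviation.
Variables (f : nat -> nat) (e0 : hedge) (p0 : nat * nat).
Hypothesis f_inj : inj_K24 f.
Hypothesis f_edges :
  forall p, p \in K24 -> [\/ edge_img f p \in A, pendant (edge_img f p) | edge_img f p = e0].
Hypothesis p0_in : p0 \in K24.
Hypothesis p0E : edge_img f p0 = e0.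

Lemma pendant_leaf p y : p \in K24 -> free_vertex y -> edge_img f p = tri c t y ->
  exists w, [/\ f w = y, 3 <= w, w \in edge_verts p0 & p = (1, w) \/ p = (2, w)].
Proof.
move=> p_in y_free pE; have [w w_p fw] := pendant_vertex pE.
exists w; have [] // := K24_degree2_leaf p0_in p_in w_p => r r_in w_r.
have [rE|rE] := pendant_through y_free fw w_r (f_edges r_in).
  by left; apply: (edge_img_inj f_inj r_in p0_in); rewrite rE p0E.
by right; apply: (edge_img_inj f_inj r_in p_in); rewrite rE pE.
Qed.

Lemma off_leaf_in_A w : 3 <= w -> w \in edge_verts p0 ->
  {in K24, forall q, w \notin edge_verts q -> edge_img f q \in A}.
Proof.
move=> w3 w_p0 q q_in w_q; case: (f_edges q_in) => [//|[y y_free qE]|qE].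
  have [w' [_ w'3 w'_p0 [] qw']] := pendant_leaf q_in y_free qE;
  by move: w_q; rewrite qw' (K24_leaf_on_edge p0_in w3 w_p0)
    -(K24_leaf_on_edge p0_in w'3 w'_p0) /edge_verts !inE eqxx !orbT.
by move: w_q; rewrite (edge_img_inj f_inj q_in p0_in) ?qE ?p0E // w_p0.
Qed.

(* The pendant edge sits on a leaf w whose other edge is e0; all edges avoiding w lie in A. *)
Lemma pendant_copy_minus_leaf p y : p \in K24 -> free_vertex y -> edge_img f p = tri c t y ->
  copy_minus_leaf.
Proof.
move=> p_in y_free pE; have [w [fw w3 w_p0 pw]] := pendant_leaf p_in y_free pE.
have [i i12 pi] : exists2 i, i \in [:: 1; 2] & p = (i, w) by case: pw => ->; [exists 1|exists 2].
subst p; have w7 : w \in iota 0 7 by apply: (K24_vert p_in); rewrite /edge_verts !inE eqxx !orbT.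
have i7 : i \in iota 0 7 by move: i12; rewrite !inE => /orP[]/eqP->.
have f_ne u v : u \in iota 0 7 -> v \in iota 0 7 -> u != v -> f u != f v.
  by move=> u_in v_in; apply: contraNneq => /f_inj ->.
exists f, w, i; split=> //.
- by move: w7; rewrite !mem_iota; lia.
- exact: off_leaf_in_A.
apply: (@tri_eq_pair (f 0) (f i) (f w) c t); last by rewrite fw -pE edge_imgE /= fw.
all: apply: f_ne => //; move: i12; rewrite !inE => /orP[]/eqP ie; lia.
Qed.

End Deviation.

Lemma deviation_cases (B : {fset hedge}) f e0 : inj_K24 f ->
    (forall p, p \in K24 -> [\/ edge_img f p \in A, pendant (edge_img f p) | edge_img f p = e0]) ->
    e0 \notin A -> e0 \notin B ->
  [\/ copy 4 (fun e => e \in A) f, threat (fun e => e \in A) (fun e => e \in B) | copy_minus_leaf].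
Proof.
move=> f_inj f_edges e0A e0B.
have [|no_e0] := boolP (has (fun p => edge_img f p == e0) K24); last first.
  apply: Or31; split=> //; apply: copy_of_pendants => // p p_in.
  case: (f_edges p p_in) => [||pE]; [by left|by right|].
  by case/hasP: no_e0; exists p; rewrite ?pE.
case/hasP=> p0 p0_in /eqP p0E.
case: (classic (exists2 p, p \in K24 & pendant (edge_img f p))) =>
    [[p p_in [y y_free pE]]|no_pendant].
  exact: Or33 (pendant_copy_minus_leaf f_inj f_edges p0_in p0E p_in y_free pE).
apply: Or32; apply: (threatI f_inj p0_in); rewrite ?p0E // => p p_in pp0.
case: (f_edges p p_in) => // [pP|pE]; first by case: no_pendant; exists p.
by case/eqP: pp0; apply: (edge_img_inj f_inj p_in p0_in); rewrite pE p0E.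
Qed.

End P1Position.

Lemma copy_minus_leaf_avoids (A : {fset hedge}) c a b f w i :
    a != c -> a != b -> tri c a b \notin A -> copy_minus_leaf_at A c b f w i ->
  forall q, q \in K24_avoiding w -> a \notin edge_img f q.
Proof.
move=> ac ab abA [f_inj w_in i12 fA fcb] q; rewrite mem_filter => /andP[w_q q_in].
apply/negP => /imfsetP[x /= x_q ax].
have [a0 ai] : a != f 0 /\ a != f i by case/orP: fcb => /andP[/eqP-> /eqP->].
have x_new : x \notin [:: 0; i; w].
  rewrite !inE; apply/negP => /or3P[]/eqP xE.
  - by move: a0; rewrite ax xE eqxx.
  - by move: ai; rewrite ax xE eqxx.
  - by move: w_q; rewrite -xE x_q.
have [q' q'_in /andP[w_q' /perm_mem q'E]] := K24_edge_via_hub i12 w_in (K24_vert q_in x_q) x_new.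
have q'_abc : edge_img f q' = tri c a b.
  have -> : edge_img f q' = edge_img f (i, x) by apply: eq_imfset.
  rewrite edge_imgE /= -ax; apply/fsetP => u; rewrite !in_tri.
  by case/orP: fcb => /andP[/eqP-> /eqP->]; case: (u == a); case: (u == b); case: (u == c).
by move: (fA q' q'_in w_q'); rewrite q'_abc (negbTE abA).
Qed.

Lemma copy_minus_leaf_exclusive (A : {fset hedge}) c a b :
    a != c -> a != b -> tri c a b \notin A -> #|` A| <= 10 ->
  copy_minus_leaf A c a -> ~ copy_minus_leaf A c b.
Proof.
move=> ac ab abA A10 [h [wh [ih [h_inj wh_in ih12 hA hca]]]] [g [wg [ig gcopy]]].
have g_avoids := copy_minus_leaf_avoids ac ab abA gcopy.
have [g_inj wg_in _ gA _] := gcopy.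
have [u u012 hu] : exists2 u, u \in [:: 0; 1; 2] & h u = a.
  case/orP: hca => /andP[/eqP h0 /eqP hi]; [exists ih|exists 0] => //.
  by move: ih12; rewrite !inE => /orP[]->; rewrite ?orbT.
pose Eg := [seq edge_img g q | q <- K24_avoiding wg].
pose Eh := [seq edge_img h q | q <- K24_avoiding wh & u \in edge_verts q].
have K24_uniq : uniq K24 by [].
have Esize : size (Eg ++ Eh) <= #|` A|.
  apply: uniq_leq_size => [|e].
    rewrite cat_uniq !map_inj_in_uniq ?filter_uniq //; first last.
    - by move=> p q; rewrite !mem_filter => /andP[_ p_in] /andP[_ q_in]; apply: edge_img_inj.
    - move=> p q; rewrite !mem_filter => /and3P[_ _ p_in] /and3P[_ _ q_in].
      exact: edge_img_inj.
    rewrite /= andbT; apply/hasPn => e /mapP[q]; rewrite mem_filter => /andP[u_q _] ->.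
    apply/negP => /mapP[q' q'_in qE]; move: (g_avoids q' q'_in).
    by rewrite -qE -hu mem_edge_img.
  rewrite mem_cat => /orP[]/mapP[q]; rewrite !mem_filter.
    by case/andP=> w_q q_in ->; apply: gA.
  by case/and3P=> _ w_q q_in ->; apply: hA.
move: Esize; rewrite size_cat !size_map size_filter (size_K24_avoiding wg_in).
have := count_K24_avoiding wh_in u012; lia.
Qed.

Lemma take_mkseq (T : Type) (f : nat -> T) k n : k <= n -> take k (mkseq f n) = mkseq f k.
Proof. by move=> le_kn; rewrite /mkseq -map_take take_iota (minn_idPl le_kn). Qed.

Lemma mem_mkseq (T : eqType) (f : nat -> T) n i : i < n -> f i \in mkseq f n.
Proof. by move=> i_lt; apply: map_f; rewrite mem_iota. Qed.

Lemma claimed1S A m n e : claimed1 A m n.+1 e -> claimed1 A m n e \/ m n = e.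
Proof.
case=> [eA|[i]]; first by left; left.
rewrite ltnS leq_eqVlt => /orP[/eqP-> [_ ->]|i_lt i_m]; [by right | by left; right; exists i].
Qed.

Section Strategy.
Variables (A B : {fset hedge}) (f0 : nat -> nat) (s t : nat).
Hypothesis f0_copy : copy 3 (fun e => e \in B) f0.
Hypothesis st_hubs : (s, t) = (f0 1, f0 2) \/ (s, t) = (f0 2, f0 1).

Definition fresh (h : seq hedge) : nat :=
  (\max_(e <- enum_fset A ++ enum_fset B ++ h) \max_(x <- enum_fset e) x).+1.

Lemma fresh_gt h e x : [\/ e \in A, e \in B | e \in h] -> x \in e -> x < fresh h.
Proof.
move=> e_in x_e; rewrite ltnS.
have e_in' : e \in enum_fset A ++ enum_fset B ++ h.
  by rewrite !mem_cat; case: e_in => ->; rewrite ?orbT.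
exact: leq_trans (leq_bigmax_seq _ x_e isT) (leq_bigmax_seq _ e_in' isT).
Qed.

Lemma fresh_notin h e : [\/ e \in A, e \in B | e \in h] -> fresh h \notin e.
Proof. by move=> e_in; apply/negP => /(fresh_gt e_in); rewrite ltnn. Qed.

Lemma fresh_tri_notin h x z :
  [/\ tri x z (fresh h) \notin A, tri x z (fresh h) \notin B & tri x z (fresh h) \notin h].
Proof.
have y_in : fresh h \in tri x z (fresh h) by rewrite in_tri eqxx !orbT.
by split; apply: contraL y_in => e_in; apply: fresh_notin; [apply: Or31|apply: Or32|apply: Or33].
Qed.

Lemma hubs_lt_fresh h : [/\ f0 0 < fresh h, s < fresh h & t < fresh h].
Proof.
have B12 : edge_img f0 (1, 2) \in B by apply: f0_copy.2.
have lt u : u \in edge_verts (1, 2) -> f0 u < fresh h.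
  by move=> u_in; apply: fresh_gt (Or32 _ _ B12) (mem_edge_img _ u_in).
by case: st_hubs => -[-> ->]; split; apply: lt.
Qed.

Lemma hubs_neq : [/\ f0 0 != s, f0 0 != t & s != t].
Proof.
by have [] := copy3_hubs_neq f0_copy; case: st_hubs => -[-> ->]; split; rewrite // eq_sym.
Qed.

Lemma fresh_tri_board h x z : x < fresh h -> z < fresh h -> x != z ->
  board_edge (tri x z (fresh h)).
Proof. by move=> x_lt z_lt xz; apply: tri_board_edge; rewrite // ltn_eqF. Qed.

(* [take (size h - 2) h] is the history before P2's previous move {c, s, y}; she claims {c, t, y}
   if P1 left it free, and otherwise plays {c, s, y'} for a new vertex y'. *)
Definition sigma : strategy := fun h =>
  let y := fresh (take (size h - 2) h) in
  if (1 < size h) && (tri (f0 0) t y \notin h) then tri (f0 0) t y else tri (f0 0) s (fresh h).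

Lemma sigma_legal h :
  [/\ board_edge (sigma h), sigma h \notin A, sigma h \notin B & sigma h \notin h].
Proof.
have [cs ct st] := hubs_neq; rewrite /sigma; case: ifP => [/andP[_ new]|_].
  have [c_lt _ t_lt] := hubs_lt_fresh (take (size h - 2) h).
  by have [] := fresh_tri_notin (take (size h - 2) h) (f0 0) t; split=> //; apply: fresh_tri_board.
have [c_lt s_lt _] := hubs_lt_fresh h.
by have [] := fresh_tri_notin h (f0 0) s; split=> //; apply: fresh_tri_board.
Qed.

Hypothesis no_copyA : ~ has_copy (Khat3 4) (nverts 4) (fun e => e \in A).
Hypothesis no_threat : ~ threat (fun e => e \in A) (fun e => e \in B).
Hypothesis no_copy_minus_leaf : ~ copy_minus_leaf A (f0 0) t.

Section Play.
Variables (m : nat -> hedge) (n : nat).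
Hypothesis m_legal : forall i, i < n -> unclaimed_at A B m i (m i).
Hypothesis m_sigma : forall i, i < n -> ~~ odd i -> m i = sigma (mkseq m i).

Definition new_vertex k := fresh (mkseq m k.*2).

Definition answered_before k :=
  forall i, i < k -> odd i -> m i = tri (f0 0) t (new_vertex i./2).

Lemma new_vertex_free k : free_vertex A (f0 0) t (new_vertex k).
Proof.
have [c_lt _ t_lt] := hubs_lt_fresh (mkseq m k.*2).
by split; [move=> e e_A; apply: fresh_notin; apply: Or31 | rewrite gtn_eqF | rewrite gtn_eqF].
Qed.

Lemma claimed1_pendant k e : answered_before k -> claimed1 A m k e ->
  e \in A \/ pendant A (f0 0) t e.
Proof.
move=> ans [eA|[i i_lt [i_odd <-]]]; [by left | right].
by exists (new_vertex i./2); [exact: new_vertex_free | exact: ans].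
Qed.

Lemma P2_move k : k.*2 < n -> answered_before k.*2 -> m k.*2 = tri (f0 0) s (new_vertex k).
Proof.
move=> k_lt ans; rewrite m_sigma ?odd_double // /sigma size_mkseq.
case: k => [//|k] in k_lt ans *.
have answer : m k.*2.+1 = tri (f0 0) t (new_vertex k) by rewrite ans //= ?uphalf_double ?odd_double.
have answered : tri (f0 0) t (new_vertex k) \in mkseq m k.*2.+2 by rewrite -answer mem_mkseq.
rewrite doubleS subn2 /= take_mkseq; last by lia.
by case: ifP => [/negP[]|//].
Qed.

Lemma P2_claims_answer k : k.*2.+2 < n -> answered_before k.*2 ->
  m k.*2.+1 != tri (f0 0) t (new_vertex k) -> m k.*2.+2 = tri (f0 0) t (new_vertex k).
Proof.
move=> k_lt ans dev.
have new : tri (f0 0) t (new_vertex k) \notin mkseq m k.*2.+2.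
  rewrite !mkseqS -!cats1 -catA mem_cat !inE; apply/or3P => -[|/eqP|/eqP E].
  - by have [_ _ /negP] := fresh_tri_notin (mkseq m k.*2) (f0 0) t.
  - have [cs ct st] := hubs_neq.
    have t_lt : t < new_vertex k by have [] := hubs_lt_fresh (mkseq m k.*2).
    rewrite P2_move; [|lia|by move=> i i_lt; apply: ans; lia].
    move/fsetP/(_ t); rewrite !in_tri eqxx orbT (eq_sym t) (negbTE ct).
    by rewrite (eq_sym t) (negbTE st) ltn_eqF.
  - by rewrite E eqxx in dev.
have even : ~~ odd k.*2.+2 by rewrite -doubleS odd_double.
rewrite m_sigma // /sigma size_mkseq subn2 /= take_mkseq; last by lia.
by rewrite /new_vertex in new *; rewrite new.
Qed.

Lemma P2_wins k : k.*2.+2 < n -> answered_before k.*2 ->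
    m k.*2.+1 != tri (f0 0) t (new_vertex k) ->
  has_copy (Khat3 4) (nverts 4) (claimed2 B m n).
Proof.
move=> k_lt ans dev; apply/has_copyE.
have claimed u : u \in [:: s; t] -> claimed2 B m n (tri (f0 0) u (new_vertex k)).
  rewrite !inE => /orP[]/eqP->; right.
    by exists k.*2; [lia | rewrite odd_double P2_move //; lia].
  by exists k.*2.+2; [lia | rewrite /= odd_double P2_claims_answer].
eexists; apply: copy_add_leaf.
- by apply: copy_sub f0_copy => e; left.
- by move=> p p_in; apply: fresh_notin; apply: Or32; apply: f0_copy.2.
- by apply: claimed; case: st_hubs => -[-> ->]; rewrite !inE eqxx ?orbT.
- by apply: claimed; case: st_hubs => -[-> ->]; rewrite !inE eqxx ?orbT.
Qed.

Lemma P1_deviation_fails k : n = k.*2.+2 -> answered_before k.*2.+1 ->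
  ~ has_copy (Khat3 4) (nverts 4) (claimed1 A m n).
Proof.
move=> nE ans /has_copyE[f [f_inj f_edges]].
have [_ [e0A e0B]] : unclaimed_at A B m k.*2.+1 (m k.*2.+1) by apply: m_legal; rewrite nE.
have f_edges' p : p \in K24 ->
    [\/ edge_img f p \in A, pendant A (f0 0) t (edge_img f p) | edge_img f p = m k.*2.+1].
  move=> p_in; move: (f_edges p p_in); rewrite nE => /claimed1S[/(claimed1_pendant ans)[]|<-].
  - by apply: Or31.
  - by apply: Or32.
  - by apply: Or33.
case: (deviation_cases f_inj f_edges' (B := B)).
- by apply/negP => e0_A; apply: e0A; left.
- by apply/negP => e0_B; apply: e0B; left.
- by move=> f_copy; apply: no_copyA; apply/has_copyE; exists f.
- exact: no_threat.
- exact: no_copy_minus_leaf.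
Qed.

Lemma sigma_blocks_P1 : has_copy (Khat3 4) (nverts 4) (claimed1 A m n) ->
  has_copy (Khat3 4) (nverts 4) (claimed2 B m n).
Proof.
move=> P1_copy.
pose deviates i := [&& i < n, odd i & m i != tri (f0 0) t (new_vertex i./2)].
have [[i dev_i]|no_dev] := classic (exists i, deviates i); last first.
  case: no_copyA; case/has_copyE: P1_copy => f [f_inj f_edges]; apply/has_copyE; exists f.
  split=> //; apply: copy_of_pendants => // p p_in; apply: (claimed1_pendant _ (f_edges p p_in)).
  move=> i i_lt i_odd; apply/eqP/negPn/negP => dev; apply: no_dev; exists i.
  by rewrite /deviates i_lt i_odd.
case: (ex_minnP (ex_intro deviates i dev_i)) => {dev_i} i /and3P[i_lt i_odd dev] i_min.
have ans : answered_before i.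
  move=> j j_lt j_odd; apply/eqP/negPn/negP => dev_j.
  by have := i_min j; rewrite /deviates j_odd dev_j (ltn_trans j_lt i_lt) leqNgt j_lt => /(_ isT).
move: i_lt dev ans; rewrite -[i]odd_double_half i_odd /= uphalf_double.
set k := i./2 => i_lt dev ans.
case: (ltngtP n k.*2.+2) => [n_lt|n_gt|n_eq]; first by exfalso; lia.
  by apply: (P2_wins n_gt _ dev) => j j_lt; apply: ans; lia.
by case: (P1_deviation_fails n_eq ans P1_copy).
Qed.

End Play.

Lemma sigma_draws : drawing_strategy A B sigma.
Proof.
move=> m n m_legal m_sigma; split; last exact: sigma_blocks_P1.
move=> _; have [board nA nB nh] := sigma_legal (mkseq m n); split=> //; split.
- case=> [|[i i_lt [_ mi]]]; first exact/negP.
  by move: nh; rewrite -mi mem_mkseq.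
- case=> [|[i i_lt [_ mi]]]; first exact/negP.
  by move: nh; rewrite -mi mem_mkseq.
Qed.

End Strategy.

Theorem corollary3p3 (A B : {fset hedge}) :
  (forall e, e \in A -> board_edge e) ->
  (forall e, e \in B -> board_edge e) ->
  (forall e, e \in A -> e \notin B) ->
  #|` A| = (#|` B|).+1 ->
  #|` A| <= 10 ->
  has_copy (Khat3 3) (nverts 3) (fun e => e \in B) ->
  ~ has_copy (Khat3 4) (nverts 4) (fun e => e \in A) ->
  ~ threat (fun e => e \in A) (fun e => e \in B) ->
  exists sigma : strategy, drawing_strategy A B sigma.
Proof.
move=> _ _ AB _ A_le10 /has_copyE[f0 f0_copy] no_copyA no_threat.
have [n01 _ n12] := copy3_hubs_neq f0_copy.
have B012 : tri (f0 0) (f0 1) (f0 2) \in B by rewrite -(edge_imgE f0 (1, 2)); apply: f0_copy.2.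
have [[s t] st_hubs no_cml] : exists2 st : nat * nat,
    st = (f0 1, f0 2) \/ st = (f0 2, f0 1) & ~ copy_minus_leaf A (f0 0) st.2.
  case: (classic (copy_minus_leaf A (f0 0) (f0 1))) => cml_f01.
    exists (f0 1, f0 2); first by left.
    apply: copy_minus_leaf_exclusive cml_f01 => //; first by rewrite eq_sym.
    by apply: contraL B012; apply: AB.
  by exists (f0 2, f0 1); first right.
by exists (sigma A B f0 s t); apply: sigma_draws.
Qed.
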